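(* Let $k\in\mathbb{N}$. The only isometric multiplication operators on $\mathcal{L}^{(k)}$, and the only isometric multiplication operators on $\mathcal{L}^{(k)}_0$, are those $M_\psi$ whose symbol $\psi$ is a constant function of modulus one.
   Context: $T$ is a tree (locally finite, connected, simply connected graph, identified with its vertex set) without terminal vertices, rooted at $o$. $|v|$ is the distance from $o$ to $v$; for $v\ne o$, $v^-$ is the parent of $v$. $T^*=T\setminus\{o\}$, $Df(v)=|f(v)-f(v^-)|$. For $x\ge1$: $\ell_0(x)=1$, $\ell_1(x)=1+\ln x$, $\ell_j(x)=1+\ln\ell_{j-1}(x)$ for $j\ge2$. $\mathcal{L}^{(k)}$ is the space of $f:T\to\mathbb{C}$ with $\sup_{v\in T^*}|v|\prod_{j=0}^{k-1}\ell_j(|v|)Df(v)<\infty$, normed by $\|f\|_k=|f(o)|+\sup_{v\in T^*}|v|\prod_{j=0}^{k-1}\ell_j(|v|)Df(v)$; $\mathcal{L}^{(k)}_0$ is its subspace of $f$ with $|v|\prod_{j=0}^{k-1}\ell_j(|v|)Df(v)\to0$ as $|v|\to\infty$. $M_\psi f=\psi f$; an isometric multiplication operator on $X$ is one with $M_\psi(X)\subseteq X$ and $\|\psi f\|_k=\|f\|_k$ for all $f\in X$. *)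

From Stdlib Require Import Reals List.
From Coquelicot Require Import Coquelicot.
Open Scope R_scope.

(* A rooted tree T (locally finite, connected, simply connected, without
   terminal vertices), encoded by its parent map.  [depth v] is the distance
   |v| from the root o; the axioms on [depth] force every vertex to reach the
   root by iterating [par] (connectedness), and the graph whose edges are
   {v, par v} (v <> o) is automatically simply connected. *)
Record rooted_tree := {
  vert : Type;
  root : vert;
  par : vert -> vert;                       (* v^- for v <> o; junk at o *)
  depth : vert -> nat;
  depth_root : depth root = 0%nat;
  depth_par : forall v, v <> root -> depth v = S (depth (par v));
  loc_finite : forall v, exists s : list vert,
      forall w, (w <> root /\ par w = v) <-> In w s;
  (* no terminal vertices (no vertex with exactly one neighbour):
     a non-root vertex has at least one child (besides its parent), and the
     root does not have exactly one child *)
  no_terminal_nonroot : forall v, v <> root -> exists w, w <> root /\ par w = v;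
  no_terminal_root : ~ (exists c, forall w, (w <> root /\ par w = root) <-> w = c)
}.

Fixpoint ell (j : nat) (x : R) : R :=
  match j with
  | O => 1
  | S O => 1 + ln x
  | S j' => 1 + ln (ell j' x)
  end.

Fixpoint prod_ell (k : nat) (x : R) : R :=
  match k with
  | O => 1
  | S k' => prod_ell k' x * ell k' x
  end.

Definition weight (k : nat) (n : nat) : R := INR n * prod_ell k (INR n).

Definition Dif (T : rooted_tree) (f : vert T -> C) (v : vert T) : R :=
  Cmod (Cminus (f v) (f (par T v))).

Definition wD (T : rooted_tree) (k : nat) (f : vert T -> C) (v : vert T) : R :=
  weight k (depth T v) * Dif T f v.

Definition in_Lk (T : rooted_tree) (k : nat) (f : vert T -> C) : Prop :=
  exists M : R, forall v, v <> root T -> wD T k f v <= M.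

Definition in_Lk0 (T : rooted_tree) (k : nat) (f : vert T -> C) : Prop :=
  in_Lk T k f /\
  forall eps : R, 0 < eps -> exists N : nat,
    forall v, v <> root T -> (N <= depth T v)%nat -> wD T k f v < eps.

(* ||f||_k = |f(o)| + sup_{v in T^*} w(|v|) Df(v).  The value 0 is added to the
   set to make the sup 0 when T^* is empty (harmless, all terms are >= 0). *)
Definition norm_k (T : rooted_tree) (k : nat) (f : vert T -> C) : R :=
  Cmod (f (root T)) +
  real (Lub_Rbar (fun x => x = 0 \/ exists v, v <> root T /\ x = wD T k f v)).

Definition isometric_mult (T : rooted_tree) (k : nat)
    (X : (vert T -> C) -> Prop) (psi : vert T -> C) : Prop :=
  (forall f, X f -> X (fun v => Cmult (psi v) (f v))) /\
  (forall f, X f -> norm_k T k (fun v => Cmult (psi v) (f v)) = norm_k T k f).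

From Stdlib Require Import Reals List.
From Coquelicot Require Import Coquelicot.
From Stdlib Require Import Lra Lia Classical ClassicalEpsilon FunctionalExtensionality.

(* If [M_psi] is isometric, applying it to
   the indicator chi_o of the root, for which psi chi_o = psi(o) chi_o and
   ||chi_o|| >= 1, gives |psi(o)| = 1.  Applying it to the constant 1 gives
   |psi(o)| + sup_v w(|v|) D psi(v) = ||psi|| = ||1|| = 1, so D psi vanishes on
   T^* (where the weights are positive) and psi is constant along every path to
   the root. *)

Lemma ell_ge1 j x : 1 <= x -> 1 <= ell j x.
Proof.
  intros Hx; induction j as [|j IH]; simpl; [lra|].
  destruct j as [|j].
  - assert (0 <= ln x) by (rewrite <- ln_1; apply ln_le; lra); lra.
  - assert (0 <= ln (ell (S j) x)) by (rewrite <- ln_1; apply ln_le; lra); lra.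
Qed.

Lemma prod_ell_ge1 k x : 1 <= x -> 1 <= prod_ell k x.
Proof.
  intros Hx; induction k as [|k IH]; simpl; [lra|].
  pose proof (ell_ge1 k x Hx); nra.
Qed.

Lemma weight_pos k n : (1 <= n)%nat -> 0 < weight k n.
Proof.
  intros Hn; unfold weight.
  assert (Hx : 1 <= INR n) by (apply (le_INR 1); exact Hn).
  pose proof (prod_ell_ge1 k _ Hx); nra.
Qed.

Lemma weight_ge0 k n : 0 <= weight k n.
Proof.
  destruct n as [|n]; [unfold weight; simpl; lra|].
  apply Rlt_le, weight_pos; lia.
Qed.

Lemma depth_ge1 (T : rooted_tree) v : v <> root T -> (1 <= depth T v)%nat.
Proof. intros Hv; rewrite (depth_par T v Hv); lia. Qed.

Lemma par_invariant_const (T : rooted_tree) (A : Type) (g : vert T -> A) :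
  (forall v, v <> root T -> g v = g (par T v)) -> forall v, g v = g (root T).
Proof.
  intros Hg v; remember (depth T v) as n eqn:Hn; revert v Hn.
  induction n as [|n IH]; intros v Hn;
    (destruct (classic (v = root T)) as [->|Hv]; [reflexivity|]);
    rewrite (depth_par T v Hv) in Hn; [discriminate|].
  rewrite (Hg v Hv); apply IH; congruence.
Qed.

Lemma Dif_ge0 T f v : 0 <= Dif T f v.
Proof. apply Cmod_ge_0. Qed.

Lemma Dif_eq0 T f v : Dif T f v = 0 -> f v = f (par T v).
Proof. intros H; apply Ceq_minus, Cmod_eq_0, H. Qed.

Lemma wD_ge0 T k f v : 0 <= wD T k f v.
Proof. apply Rmult_le_pos; [apply weight_ge0|apply Dif_ge0]. Qed.

Lemma wD_scal T k f c v :
  wD T k (fun w => Cmult c (f w)) v = Cmod c * wD T k f v.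
Proof.
  unfold wD, Dif.
  replace (Cminus (Cmult c (f v)) (Cmult c (f (par T v))))
    with (Cmult c (Cminus (f v) (f (par T v)))) by ring.
  rewrite Cmod_mult; ring.
Qed.

Lemma wD_const T k (c : C) v : wD T k (fun _ => c) v = 0.
Proof.
  unfold wD, Dif; replace (Cminus c c) with (RtoC 0) by ring.
  rewrite Cmod_0; ring.
Qed.

Lemma in_Lk0_in_Lk T k f : in_Lk0 T k f -> in_Lk T k f.
Proof. intros [Hf _]; exact Hf. Qed.

Lemma in_Lk_scal T k f c : in_Lk T k f -> in_Lk T k (fun v => Cmult c (f v)).
Proof.
  intros [M HM]; exists (Cmod c * M); intros v Hv; rewrite wD_scal.
  apply Rmult_le_compat_l; [apply Cmod_ge_0|auto].
Qed.

Lemma in_Lk0_scal T k f c : in_Lk0 T k f -> in_Lk0 T k (fun v => Cmult c (f v)).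
Proof.
  intros [Hf Hlim]; split; [apply in_Lk_scal, Hf|].
  intros eps Heps; pose proof (Cmod_ge_0 c) as Hc.
  destruct (Hlim (eps / (Cmod c + 1))) as [N HN].
  { apply Rdiv_lt_0_compat; lra. }
  exists N; intros v Hv Hd; rewrite wD_scal.
  specialize (HN v Hv Hd); pose proof (wD_ge0 T k f v).
  apply (Rmult_lt_compat_r (Cmod c + 1)) in HN; [|lra].
  unfold Rdiv in HN; rewrite Rmult_assoc, Rinv_l in HN; nra.
Qed.

Lemma in_Lk0_const T k (c : C) : in_Lk0 T k (fun _ => c).
Proof.
  split.
  - exists 0; intros v _; rewrite wD_const; lra.
  - intros eps Heps; exists 0%nat; intros v _ _; rewrite wD_const; lra.
Qed.

Definition root_indicator (T : rooted_tree) (v : vert T) : C :=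
  if excluded_middle_informative (v = root T) then RtoC 1 else RtoC 0.

Lemma root_indicator_root T : root_indicator T (root T) = RtoC 1.
Proof. unfold root_indicator; destruct excluded_middle_informative; congruence. Qed.

Lemma root_indicator_nonroot T v : v <> root T -> root_indicator T v = RtoC 0.
Proof. unfold root_indicator; destruct excluded_middle_informative; congruence. Qed.

Lemma wD_root_indicator_child T k v :
  v <> root T -> par T v = root T -> wD T k (root_indicator T) v = weight k 1.
Proof.
  intros Hv Hp; unfold wD, Dif.
  rewrite (depth_par T v Hv), Hp, depth_root, root_indicator_root,
    (root_indicator_nonroot T v Hv).
  replace (Cminus 0 1) with (Copp 1) by ring.
  rewrite Cmod_opp, Cmod_1; ring.
Qed.

Lemma wD_root_indicator_far T k v :
  v <> root T -> par T v <> root T -> wD T k (root_indicator T) v = 0.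
Proof.
  intros Hv Hp; unfold wD, Dif.
  rewrite (root_indicator_nonroot T v Hv), (root_indicator_nonroot T _ Hp).
  replace (Cminus 0 0) with (RtoC 0) by ring.
  rewrite Cmod_0; ring.
Qed.

Lemma in_Lk0_root_indicator T k : in_Lk0 T k (root_indicator T).
Proof.
  pose proof (weight_ge0 k 1).
  split.
  - exists (weight k 1); intros v Hv.
    destruct (classic (par T v = root T)) as [Hp|Hp].
    + rewrite wD_root_indicator_child; auto; lra.
    + rewrite wD_root_indicator_far; auto.
  - intros eps Heps; exists 2%nat; intros v Hv Hd.
    rewrite wD_root_indicator_far; auto.
    intros Hp; rewrite (depth_par T v Hv), Hp, depth_root in Hd; lia.
Qed.

Lemma Lub_Rbar_zero : Lub_Rbar (fun x => x = 0) = 0.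
Proof.
  apply is_lub_Rbar_unique; split.
  - intros x ->; simpl; lra.
  - intros b Hb; apply Hb; reflexivity.
Qed.

Lemma Lub_Rbar_scal (E : R -> Prop) (z : posreal) :
  Lub_Rbar (fun x => E (x / z)) = Rbar_mult_pos (Lub_Rbar E) z.
Proof.
  assert (Hz := cond_pos z).
  pose (zinv := mkposreal _ (Rinv_0_lt_compat _ Hz)).
  destruct (Lub_Rbar_correct E) as [Hub Hleast].
  apply is_lub_Rbar_unique; split.
  - intros x Hx.
    replace (Finite x) with (Rbar_mult_pos (x / z) z) by (simpl; f_equal; field; lra).
    apply Rbar_mult_pos_le, Hub, Hx.
  - intros b Hb.
    assert (Hb' : Rbar_le (Lub_Rbar E) (Rbar_mult_pos b zinv)).
    { apply Hleast; intros x Hx.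
      replace (Finite x) with (Rbar_mult_pos (x * z) zinv) by (simpl; f_equal; field; lra).
      apply Rbar_mult_pos_le, Hb.
      replace (x * z / z) with x by (field; lra); exact Hx. }
    apply (Rbar_mult_pos_le _ _ z) in Hb'.
    destruct b as [b| |]; simpl in *; auto.
    replace (b * / z * z) with b in Hb' by (field; lra); exact Hb'.
Qed.

Definition wD_values (T : rooted_tree) (k : nat) (f : vert T -> C) (x : R) : Prop :=
  x = 0 \/ exists v, v <> root T /\ x = wD T k f v.

Definition wD_sup (T : rooted_tree) (k : nat) (f : vert T -> C) : R :=
  real (Lub_Rbar (wD_values T k f)).

Lemma norm_k_wD_sup T k f : norm_k T k f = Cmod (f (root T)) + wD_sup T k f.
Proof. reflexivity. Qed.

Lemma wD_sup_ge0 T k f : 0 <= wD_sup T k f.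
Proof.
  unfold wD_sup; destruct (Lub_Rbar_correct (wD_values T k f)) as [Hub _].
  specialize (Hub 0 (or_introl eq_refl)).
  destruct Lub_Rbar; simpl in *; lra.
Qed.

Lemma wD_le_wD_sup T k f v : in_Lk T k f -> v <> root T -> wD T k f v <= wD_sup T k f.
Proof.
  intros [M HM] Hv; unfold wD_sup.
  destruct (Lub_Rbar_correct (wD_values T k f)) as [Hub Hleast].
  assert (HM' : Rbar_le (Lub_Rbar (wD_values T k f)) M).
  { apply Hleast; intros x [->|[w [Hw ->]]]; simpl; [|apply HM, Hw].
    pose proof (wD_ge0 T k f v); pose proof (HM v Hv); lra. }
  specialize (Hub (wD T k f v) (or_intror (ex_intro _ v (conj Hv eq_refl)))).
  destruct Lub_Rbar; simpl in *; tauto.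
Qed.

Lemma wD_sup_eq0 T k f : (forall v, v <> root T -> wD T k f v = 0) -> wD_sup T k f = 0.
Proof.
  intros Hf; unfold wD_sup.
  transitivity (real (Lub_Rbar (fun x => x = 0))); [|now rewrite Lub_Rbar_zero].
  f_equal; apply Lub_Rbar_eqset; intros x; split; [|now left].
  intros [->|[v [Hv ->]]]; auto.
Qed.

Lemma wD_sup_scal T k f c :
  wD_sup T k (fun v => Cmult c (f v)) = Cmod c * wD_sup T k f.
Proof.
  destruct (Req_dec (Cmod c) 0) as [H0|Hc].
  - rewrite H0, Rmult_0_l; apply wD_sup_eq0; intros v _.
    rewrite wD_scal, H0; ring.
  - assert (Hpos : 0 < Cmod c) by (pose proof (Cmod_ge_0 c); lra).
    unfold wD_sup.
    rewrite (Lub_Rbar_eqset _ (fun x => wD_values T k f (x / mkposreal _ Hpos))).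
    + rewrite Lub_Rbar_scal; destruct Lub_Rbar; simpl; ring.
    + intros x; unfold wD_values; simpl; setoid_rewrite wD_scal.
      assert (Hdiv : forall y, x = Cmod c * y <-> x / Cmod c = y)
        by (intros y; split; [intros ->|intros <-]; field; lra).
      rewrite <- (Rmult_0_r (Cmod c)) at 1; setoid_rewrite Hdiv; reflexivity.
Qed.

Lemma norm_k_scal T k f c :
  norm_k T k (fun v => Cmult c (f v)) = Cmod c * norm_k T k f.
Proof. rewrite !norm_k_wD_sup, wD_sup_scal, Cmod_mult; ring. Qed.

Lemma norm_k_const T k (c : C) : norm_k T k (fun _ => c) = Cmod c.
Proof.
  rewrite norm_k_wD_sup, wD_sup_eq0; [ring|].
  intros v _; apply wD_const.
Qed.

Section IsometricMultiplication.

Variables (T : rooted_tree) (k : nat) (X : (vert T -> C) -> Prop).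

Hypothesis X_scal : forall c f, X f -> X (fun v => Cmult c (f v)).
Hypothesis X_in_Lk : forall f, X f -> in_Lk T k f.
Hypothesis X_one : X (fun _ => RtoC 1).
Hypothesis X_root_indicator : X (root_indicator T).

Lemma unimodular_const_isometric_mult psi c :
  Cmod c = 1 -> (forall v, psi v = c) -> isometric_mult T k X psi.
Proof.
  intros Hc Hpsi.
  replace psi with (fun _ : vert T => c) by (apply functional_extensionality; auto).
  split; intros f Hf; [apply X_scal, Hf|].
  rewrite norm_k_scal, Hc; ring.
Qed.

Lemma isometric_mult_root_unimodular psi :
  isometric_mult T k X psi -> Cmod (psi (root T)) = 1.
Proof.
  intros [_ Hiso].
  pose proof (Hiso _ X_root_indicator) as Hnorm.
  replace (fun v => Cmult (psi v) (root_indicator T v))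
    with (fun v => Cmult (psi (root T)) (root_indicator T v)) in Hnorm.
  2:{ apply functional_extensionality; intros v.
      destruct (classic (v = root T)) as [->|Hv]; [reflexivity|].
      rewrite (root_indicator_nonroot T v Hv); ring. }
  rewrite norm_k_scal in Hnorm.
  assert (1 <= norm_k T k (root_indicator T)).
  { rewrite norm_k_wD_sup, root_indicator_root, Cmod_1.
    pose proof (wD_sup_ge0 T k (root_indicator T)); lra. }
  apply (Rmult_eq_reg_r (norm_k T k (root_indicator T))); lra.
Qed.

Lemma isometric_mult_unimodular_const psi :
  isometric_mult T k X psi -> exists c, Cmod c = 1 /\ forall v, psi v = c.
Proof.
  intros Hpsi; pose proof (isometric_mult_root_unimodular psi Hpsi) as Hroot.
  destruct Hpsi as [Hclosed Hiso].
  pose proof (Hiso _ X_one) as Hnorm; pose proof (X_in_Lk _ (Hclosed _ X_one)) as Hpsi.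
  assert (Hpsi1 : (fun v => Cmult (psi v) (RtoC 1)) = psi)
    by (apply functional_extensionality; intros; ring).
  cbv beta in Hnorm, Hpsi; rewrite Hpsi1 in Hnorm, Hpsi.
  assert (Hsup : wD_sup T k psi = 0).
  { rewrite norm_k_const, Cmod_1, norm_k_wD_sup, Hroot in Hnorm; lra. }
  exists (psi (root T)); split; [exact Hroot|].
  apply par_invariant_const; intros v Hv; apply Dif_eq0.
  pose proof (wD_le_wD_sup T k psi v Hpsi Hv) as Hle.
  pose proof (weight_pos k _ (depth_ge1 T v Hv)); pose proof (Dif_ge0 T psi v).
  unfold wD in Hle; nra.
Qed.

Lemma isometric_mult_iff_unimodular_const psi :
  isometric_mult T k X psi <-> exists c, Cmod c = 1 /\ forall v, psi v = c.
Proof.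
  split; [apply isometric_mult_unimodular_const|].
  intros [c [Hc Hpsi]]; exact (unimodular_const_isometric_mult psi c Hc Hpsi).
Qed.

End IsometricMultiplication.

Theorem theorem5p1 (T : rooted_tree) (k : nat) (psi : vert T -> C) :
  (isometric_mult T k (in_Lk T k) psi <->
     exists c : C, Cmod c = 1 /\ forall v, psi v = c) /\
  (isometric_mult T k (in_Lk0 T k) psi <->
     exists c : C, Cmod c = 1 /\ forall v, psi v = c).
Proof.
  split; apply isometric_mult_iff_unimodular_const.
  - intros c f; apply in_Lk_scal.
  - auto.
  - apply in_Lk0_in_Lk, in_Lk0_const.
  - apply in_Lk0_in_Lk, in_Lk0_root_indicator.
  - intros c f; apply in_Lk0_scal.
  - intros f; apply in_Lk0_in_Lk.
  - apply in_Lk0_const.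
  - apply in_Lk0_root_indicator.
Qed.
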